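(* Let $G=(V,E)$ be a graph, $v\in V$, $S_v$ the partial star product of $v$, and $f\in F_v$. Then $f$ is the opposite edge (in a square of $S_v$) of exactly one primal edge $e\in E_v$, and $(e,f)\in\mathfrak d_{|S_v}$.
   Context: All graphs are finite, simple and undirected. For a graph $G=(V,E)$ and $v\in V$, $E_v$ denotes the set of edges incident to $v$. For two distinct adjacent edges $e=(v,u)$, $f=(v,w)$, a square spanned by $e$ and $f$ is a $4$-cycle $v,u,x,w,v$ with $x\notin\{v,u,w\}$; $x$ is its top vertex. The square is chordless if neither $(u,w)$ nor $(v,x)$ is an edge of $G$. In a square $v,u,x,w$, $(x,w)$ is the opposite edge of $(v,u)$ and $(x,u)$ is the opposite edge of $(v,w)$ (and vice versa). The relation $\delta(G)\subseteq E\times E$: $(e,f)\in\delta(G)$ iff (i) $e,f$ are distinct adjacent edges and it is not the case that $e$ and $f$ span exactly one square and that square is chordless; or (ii) $e,f$ are opposite edges of a chordless square; or (iii) $e=f$. Define $\mathfrak d_v=((E_v\times E)\cup(E\times E_v))\cap\delta(G)$ and $\mathfrak d_v^*$ the finest equivalence relation on $E$ containing $\mathfrak d_v$. Let $F_v\subseteq E\setminus E_v$ be the set of edges that are the edges not incident to $v$ of some chordless square spanned by two edges $e,e'\in E_v$ with $(e,e')\notin\mathfrak d_v^*$. The partial star product $S_v$ is the subgraph of $G$ with edge set $E_v\cup F_v$ and vertex set the endpoints of these edges. Define $\mathfrak d_{|S_v}=\{(e,f)\in\mathfrak d_v^*: e,f\in E(S_v)\}$, an equivalence relation on $E(S_v)$.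 *)

(* A finite simple graph is a symmetric irreflexive relation
   g : rel T on a finite vertex type T; an edge is the 2-element set {u,w}
   with g u w. *)
From mathcomp Require Import all_boot.
Set Implicit Arguments. Unset Strict Implicit. Unset Printing Implicit Defensive.

Section Defs.
Variables (T : finType) (g : rel T).

Definition is_edge (A : {set T}) : bool :=
  [exists u, exists w, g u w && (A == [set u; w])].

Definition inc (v : T) (A : {set T}) : bool := is_edge A && (v \in A).

(* v,u,x,w,v is a square spanned by (v,u),(v,w) with top vertex x *)
Definition sq (v u w x : T) : bool :=
  [&& g v u, g v w, g u x, g x w, u != w, x != v, x != u & x != w].

Definition chordless (v u w x : T) : bool := ~~ g u w && ~~ g v x.

(* A and B span exactly one square, and that square is chordless
   (squares spanned by (v,u),(v,w) are identified by their top vertex) *)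
Definition one_chordless_sq (A B : {set T}) : bool :=
  [exists v, exists u, exists w,
     [&& A == [set v; u], B == [set v; w], g v u, g v w, u != w,
         #|[set x | sq v u w x]| == 1 &
         [forall x, sq v u w x ==> chordless v u w x]]].

Definition opp_chordless (A B : {set T}) : bool :=
  [exists v, exists u, exists w, exists x,
     [&& sq v u w x, chordless v u w x &
       [|| (A == [set v; u]) && (B == [set x; w]),
           (A == [set x; w]) && (B == [set v; u]),
           (A == [set v; w]) && (B == [set x; u]) |
           (A == [set x; u]) && (B == [set v; w])]]].

Definition delta (A B : {set T}) : bool :=
  [&& is_edge A, is_edge B &
   [|| [&& A != B, A :&: B != set0 & ~~ one_chordless_sq A B],
       opp_chordless A B | A == B]].

Definition dv (v : T) (A B : {set T}) : bool :=
  ((inc v A && is_edge B) || (is_edge A && inc v B)) && delta A B.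

(* d_v^* : finest equivalence relation on E containing d_v *)
Definition dvstar (v : T) (A B : {set T}) : bool :=
  [&& is_edge A, is_edge B &
      connect [rel X Y | dv v X Y || dv v Y X] A B].

Definition in_Fv (v : T) (f : {set T}) : bool :=
  [&& is_edge f, v \notin f &
   [exists u, exists w, exists x,
     [&& sq v u w x, chordless v u w x,
         ~~ dvstar v [set v; u] [set v; w] &
         (f == [set u; x]) || (f == [set w; x])]]].

Definition in_Sv (v : T) (A : {set T}) : bool := inc v A || in_Fv v A.

Definition dSv (v : T) (A B : {set T}) : bool :=
  [&& in_Sv v A, in_Sv v B & dvstar v A B].

Definition opp_in_Sv (v : T) (e f : {set T}) : bool :=
  [exists a, exists b, exists c, exists d,
     [&& sq a b c d,
         in_Sv v [set a; b], in_Sv v [set b; d],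
         in_Sv v [set d; c], in_Sv v [set c; a] &
       [|| (e == [set a; b]) && (f == [set d; c]),
           (e == [set d; c]) && (f == [set a; b]),
           (e == [set a; c]) && (f == [set d; b]) |
           (e == [set d; b]) && (f == [set a; c])]]].

End Defs.

(* Let f be in F_v, witnessed by a chordless square v,u,x,w with f = {u,x}
   and (vu, vw) not in d_v^*.  The primal edge asked for is e = {v,w}:

   - existence: v,w,x,u is a square all of whose edges lie in S_v (vw, vu
     are primal, and both ux and wx belong to F_v by the same witness), and
     in it vw is opposite to ux;  moreover (ux, vw) are opposite edges of a
     chordless square, hence in d_v, which gives (e,f) in d_{|S_v};
   - uniqueness: if a primal edge vq is opposite to {u,x} in a square, then
     either v is adjacent to x (a chord of the witness square), or v,q,x,u is
     a square; if q <> w the edges uv and ux span two squares (tops w and q),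
     so (uv, ux) is in delta and thus in d_v, and chaining with (ux, vw)
     gives (vu, vw) in d_v^*, contradicting the choice of the witness. *)
From mathcomp Require Import all_boot.
Set Implicit Arguments. Unset Strict Implicit. Unset Printing Implicit Defensive.

Lemma set2_eq (T : finType) (a b c d : T) :
  [set a; b] = [set c; d] -> (a = c /\ b = d) \/ (a = d /\ b = c).
Proof.
move=> E.
have Ha : a \in [set c; d] by rewrite -E set21.
have Hb : b \in [set c; d] by rewrite -E set22.
have Hc : c \in [set a; b] by rewrite E set21.
have Hd : d \in [set a; b] by rewrite E set22.
by case/set2P: Ha Hb Hc Hd => ? /set2P[] ? /set2P[] ? /set2P[] ?; subst; auto.
Qed.

Section PartialStarProduct.
Variables (T : finType) (g : rel T).
Hypotheses (g_sym : symmetric g) (g_irr : irreflexive g).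

Lemma edge_set2 a b : g a b -> is_edge g [set a; b].
Proof. by move=> gab; apply/existsP; exists a; apply/existsP; exists b; rewrite gab eqxx. Qed.

Lemma adj_neq a b : g a b -> a != b.
Proof. by apply: contraTneq => ->; rewrite g_irr. Qed.

Lemma sqC v u w x : sq g v u w x -> sq g v w u x.
Proof.
case/and4P=> gvu gvw gux /and5P[gxw nuw nxv nxu nxw].
by rewrite /sq gvw gvu (g_sym w x) gxw (g_sym x u) gux eq_sym nuw nxv nxu nxw.
Qed.

Lemma sq_rot v u w x : sq g v u w x -> sq g u v x w.
Proof.
case/and4P=> gvu gvw gux /and5P[gxw nuw nxv nxu nxw].
rewrite /sq (g_sym u v) gvu gux gvw (g_sym w x) gxw eq_sym nxv eq_sym nuw.
by rewrite (eq_sym w v) (adj_neq gvw) eq_sym nxw.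
Qed.

Lemma chordlessC v u w x : chordless g v u w x -> chordless g v w u x.
Proof. by rewrite /chordless g_sym. Qed.

Let dv_sym v : symmetric [rel X Y | dv g v X Y || dv g v Y X].
Proof. by move=> X Y; rewrite /= orbC. Qed.

Lemma dvstar_sym v A B : dvstar g v A B -> dvstar g v B A.
Proof. by case/and3P=> EA EB; rewrite /dvstar EA EB (sym_connect_sym (dv_sym v)). Qed.

Lemma dvstar_trans v A B C :
  dvstar g v A B -> dvstar g v B C -> dvstar g v A C.
Proof.
case/and3P=> EA _ cAB /and3P[_ EC cBC].
by rewrite /dvstar EA EC (connect_trans cAB cBC).
Qed.

Lemma dv_dvstar v A B : dv g v A B -> dvstar g v A B.
Proof.
move=> dAB; have /andP[_ /and3P[EA EB _]] := dAB.
by rewrite /dvstar EA EB connect1 //= dAB.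
Qed.

Lemma one_chordless_sq_card a b c : g a b -> g a c -> b != c ->
  one_chordless_sq g [set a; b] [set a; c] -> #|[set z | sq g a b c z]| == 1.
Proof.
move=> gab gac nbc /existsP[v /existsP[u /existsP[w]]].
case/and5P=> /eqP E1 /eqP E2 _ _ /and3P[_ card1 _].
have nab := adj_neq gab; have nac := adj_neq gac.
case: (set2_eq E1) => -[? ?]; case: (set2_eq E2) => -[? ?]; subst => //.
all: by rewrite eqxx in nab nac nbc.
Qed.

Lemma delta_two_squares a b c x y :
  sq g a b c x -> sq g a b c y -> x != y -> delta g [set a; b] [set a; c].
Proof.
move=> sqx sqy nxy; have /and4P[gab gac _ /and5P[_ nbc _ _ _]] := sqx.
rewrite /delta !edge_set2 //=; apply/orP; left; apply/and3P; split.
- apply: contra nbc => /eqP E; have : c \in [set a; b] by rewrite E set22.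
  by rewrite in_set2 eq_sym (negbTE (adj_neq gac)) eq_sym.
- by apply/set0Pn; exists a; rewrite !inE eqxx.
- apply/negP => /(one_chordless_sq_card gab gac nbc) /eqP card1.
  have : [set x; y] \subset [set z | sq g a b c z].
    by apply/subsetP => z /set2P[] ->; rewrite inE.
  by move/subset_leq_card; rewrite card1 cards2 nxy.
Qed.

Lemma dv_opposite v u w x : sq g v u w x -> chordless g v u w x ->
  dv g v [set u; x] [set v; w].
Proof.
move=> hsq hcl; have /and4P[_ gvw gux _] := hsq.
rewrite /dv /inc /delta !edge_set2 // set21 orbT /=.
apply/orP; right; apply/orP; left.
apply/existsP; exists v; apply/existsP; exists u; apply/existsP; exists w.
by apply/existsP; exists x; rewrite hsq hcl (setUC [set u]) !eqxx !orbT.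
Qed.

Lemma in_Fv_square v f : in_Fv g v f ->
  exists u w x, [/\ sq g v u w x, chordless g v u w x,
                    ~~ dvstar g v [set v; u] [set v; w] & f = [set u; x]].
Proof.
case/and3P=> _ _ /existsP[u /existsP[w /existsP[x]]].
case/and4P=> hsq hcl hnd /orP[] /eqP ->; first by exists u, w, x.
exists w, u, x; split=> //; [exact: sqC | exact: chordlessC |].
by apply: contra hnd => /dvstar_sym.
Qed.

Lemma square_in_Fv v u w x : sq g v u w x -> chordless g v u w x ->
  ~~ dvstar g v [set v; u] [set v; w] -> in_Fv g v [set u; x].
Proof.
move=> hsq hcl hnd; have /and4P[gvu _ gux /and5P[_ _ nxv _ _]] := hsq.
rewrite /in_Fv edge_set2 // in_set2 negb_or (adj_neq gvu) eq_sym nxv /=.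
apply/existsP; exists u; apply/existsP; exists w; apply/existsP; exists x.
by rewrite hsq hcl hnd eqxx.
Qed.

Lemma opp_in_Sv_square v e f : opp_in_Sv g v e f ->
  exists p q r s, [/\ sq g p q s r, e = [set p; q] & f = [set r; s]].
Proof.
case/existsP=> a /existsP[b /existsP[c /existsP[d /and5P[hsq _ _ _]]]].
case/andP=> _ /or4P[] /andP[/eqP -> /eqP ->].
- by exists a, b, d, c; split.
- by exists d, c, a, b; split; first exact/sqC/sq_rot/sqC/sq_rot.
- by exists a, c, d, b; split; first exact: sqC.
- by exists d, b, a, c; split; first exact/sq_rot/sqC/sq_rot.
Qed.

Lemma opposite_in_Sv v u w x : sq g v u w x -> chordless g v u w x ->
  ~~ dvstar g v [set v; u] [set v; w] -> opp_in_Sv g v [set v; w] [set u; x].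
Proof.
move=> hsq hcl hnd; have /and4P[gvu gvw gux /andP[gxw _]] := hsq.
have Fux := square_in_Fv hsq hcl hnd.
have Fwx : in_Fv g v [set w; x].
  by apply: square_in_Fv (sqC hsq) (chordlessC hcl) _; apply: contra hnd => /dvstar_sym.
apply/existsP; exists v; apply/existsP; exists w; apply/existsP; exists u.
apply/existsP; exists x; rewrite sqC //= /in_Sv /inc.
rewrite !edge_set2 ?(g_sym u v) ?(g_sym x u) ?(g_sym w x) //.
by rewrite set21 set22 Fwx (setUC [set x]) Fux !orbT !eqxx.
Qed.

Lemma opposite_primal_unique v u w x p q r s :
  sq g v u w x -> chordless g v u w x -> ~~ dvstar g v [set v; u] [set v; w] ->
  sq g p q s r -> v \in [set p; q] -> [set r; s] = [set u; x] ->
  [set p; q] = [set v; w].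
Proof.
move=> hsq hcl hnd.
wlog <-: p q r s / v = p => [reduce|].
  move=> hpq /set2P[] vpq Ers; first by apply: (reduce p q r s); rewrite // -vpq set21.
  rewrite setUC; apply: (reduce q p s r vpq (sq_rot hpq)).
    by rewrite -vpq set21.
  by rewrite setUC.
move=> hvq _ /set2_eq[] [Er Es]; rewrite {}Er {}Es in hvq.
  (* r = u, s = x: then vx would be a chord of the witness square *)
  by case/andP: hcl => _; have /and3P[_ -> _] := hvq.
(* r = x, s = u and q <> w: uv, ux span the squares with tops w and q,
   so vu ~ ux ~ vw in d_v^* *)
case: (eqVneq q w) => [-> // | nqw]; case/negP: hnd.
have /and4P[gvu _ gux _] := hsq.
have dv_vu_ux : dv g v [set u; v] [set u; x].
  rewrite /dv /inc !edge_set2 ?set22 ?(g_sym u v) //=.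
  by apply: delta_two_squares (sq_rot hsq) (sq_rot (sqC hvq)) _; rewrite eq_sym.
rewrite setUC; apply: dvstar_trans (dv_dvstar dv_vu_ux) _.
exact/dv_dvstar/dv_opposite.
Qed.

End PartialStarProduct.

Theorem lemma3p4 (T : finType) (g : rel T)
    (g_sym : symmetric g) (g_irr : irreflexive g) (v : T) (f : {set T}) :
  in_Fv g v f ->
  exists e : {set T},
    [/\ inc g v e, opp_in_Sv g v e f,
        (forall e' : {set T}, inc g v e' -> opp_in_Sv g v e' f -> e' = e)
      & dSv g v e f].
Proof.
move=> hF; have [u [w [x [hsq hcl hnd Ef]]]] := in_Fv_square g_sym hF.
have /and4P[_ gvw _ _] := hsq.
have inc_vw : inc g v [set v; w] by rewrite /inc edge_set2 ?set21.
exists [set v; w]; split=> //.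
- by rewrite Ef; exact: (opposite_in_Sv g_sym g_irr hsq hcl hnd).
- move=> e' /andP[_ ve'] /(opp_in_Sv_square g_sym g_irr)[p [q [r [s [hpqrs Ee' Ef']]]]].
  rewrite Ee' in ve' *; rewrite Ef in Ef'.
  exact: (opposite_primal_unique g_sym g_irr hsq hcl hnd hpqrs ve' (esym Ef')).
- rewrite /dSv /in_Sv inc_vw hF orbT /= Ef.
  exact/dvstar_sym/dv_dvstar/dv_opposite.
Qed.
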